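(* For any graph $G$ with no isolated vertex, order $n$ and maximum degree $\Delta$, $$\left\lceil\frac{2n+\gamma_t(G)}{\Delta+1}\right\rceil\le\gamma_{(2,2,1)}(G)\le\min\{3\gamma(G),2\gamma_t(G)\}.$$ Furthermore, if $G$ has minimum degree $\delta\ge2$, then $\gamma_{(2,2,1)}(G)\le\gamma_{\times2,t}(G)$.
   Context: All graphs are finite and simple; $N(v)$ is the open neighbourhood. $\gamma_{(2,2,1)}(G)$ is the minimum of $\sum_v f(v)$ over functions $f:V(G)\to\{0,1,2\}$ such that $\sum_{u\in N(v)}f(u)\ge 2$ whenever $f(v)\in\{0,1\}$ and $\sum_{u\in N(v)}f(u)\ge1$ whenever $f(v)=2$. $\gamma(G)$ is the domination number, $\gamma_t(G)$ the total domination number (minimum size of $S$ such that every vertex has a neighbour in $S$), and $\gamma_{\times2,t}(G)$ the minimum size of $S\subseteq V(G)$ such that every vertex has at least two neighbours in $S$. *)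

From mathcomp Require Import all_boot all_order.
Set Implicit Arguments. Unset Strict Implicit. Unset Printing Implicit Defensive.

(* A finite simple graph: vertex type T (finType), adjacency e : rel T,
   assumed symmetric and irreflexive in the theorem. *)
Section Graph.
Variables (T : finType) (e : rel T).

Definition nbhd (v : T) : {set T} := [set u | e v u].
Definition deg (v : T) : nat := #|nbhd v|.
Definition maxdeg : nat := \max_(v : T) deg v.

Definition weight (f : {ffun T -> 'I_3}) : nat := \sum_(v : T) (f v : nat).
Definition nsum (f : {ffun T -> 'I_3}) (v : T) : nat :=
  \sum_(u in nbhd v) (f u : nat).
Definition is_221_fun (f : {ffun T -> 'I_3}) : bool :=
  [forall v, if (f v : nat) == 2 then 1 <= nsum f v else 2 <= nsum f v].

(* Minimum over all valid objects; the default value is only used if no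
   valid object exists, which never happens under the theorem's hypotheses. *)
Definition gamma221 : nat :=
  \big[minn/(2 * #|T|).+1]_(f : {ffun T -> 'I_3} | is_221_fun f) weight f.

Definition is_dom (S : {set T}) : bool :=
  [forall v, (v \in S) || [exists u in S, e v u]].
Definition gamma : nat := \big[minn/#|T|.+1]_(S : {set T} | is_dom S) #|S|.

Definition is_tdom (S : {set T}) : bool :=
  [forall v, [exists u in S, e v u]].
Definition gamma_t : nat := \big[minn/#|T|.+1]_(S : {set T} | is_tdom S) #|S|.

Definition is_dtdom (S : {set T}) : bool :=
  [forall v, 2 <= #|nbhd v :&: S|].
Definition gamma_x2t : nat := \big[minn/#|T|.+1]_(S : {set T} | is_dtdom S) #|S|.

End Graph.

Definition ceil_div (a b : nat) : nat := (a + b.-1) %/ b.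

(* Let f be a (2,2,1)-function, P its support and Q the set where f = 2, so
   that w(f) = |P| + |Q|.  Every vertex sees a positive value, so P is a total
   dominating set and gamma_t <= |P|.  Summing the defining condition
   2 <= f(N(v)) + [f(v) = 2] over all v counts each f(u) exactly deg(u) times:
   2n <= Delta w(f) + |Q|.  Adding the two gives
   2n + gamma_t <= (Delta + 1) w(f).
   The upper bounds are explicit functions: 2 on a total dominating set; 2 on
   a dominating set S and 1 on one chosen neighbour of each vertex of S; 1 on a
   double total dominating set. *)

From mathcomp Require Import all_boot all_order.
From mathcomp Require Import zify.

Set Implicit Arguments.
Unset Strict Implicit.
Unset Printing Implicit Defensive.

Import Order.TTheory.

Lemma bigminn_le_cond (I : finType) (P : pred I) (F : I -> nat) d j :
  P j -> \big[minn/d]_(i | P i) F i <= F j.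
Proof. by move=> Pj; have := bigmin_le_cond d F Pj; rewrite minEnat. Qed.

Lemma eq_bigminn (I : finType) (P : pred I) (F : I -> nat) d j :
  P j -> (forall i, P i -> F i <= d) ->
  exists2 i, P i & \big[minn/d]_(i | P i) F i = F i.
Proof.
move=> Pj leFd; rewrite -minEnat.
by have [i Pi ->] := eq_bigmin j P F Pj leFd; exists i.
Qed.

Lemma sum_mem_card (T : finType) (A : {pred T}) : \sum_(v : T) (v \in A) = #|A|.
Proof.
by rewrite -sum1_card [RHS]big_mkcond; apply: eq_bigr => v _; case: (v \in A).
Qed.

Lemma ceil_div_leq a b w : a <= b.+1 * w -> ceil_div a b.+1 <= w.
Proof. by move=> le_a; rewrite /ceil_div -ltnS ltn_divLR //; lia. Qed.

Section Graph.
Variables (T : finType) (e : rel T).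
Implicit Types (f : {ffun T -> 'I_3}) (S A B : {set T}).

Lemma bigmin_card_attained (P : pred {set T}) S0 : P S0 ->
  exists2 S, P S & \big[minn/#|T|.+1]_(S | P S) #|S| = #|S|.
Proof. by move=> PS0; apply: eq_bigminn PS0 _ => S _; apply/leqW/max_card. Qed.

Lemma weight_le2card f : weight f <= 2 * #|T|.
Proof.
rewrite /weight mulnC -sum1_card big_distrl /=.
by apply: leq_sum => v _; rewrite mul1n -ltnS ltn_ord.
Qed.

Lemma gamma221_le f : is_221_fun e f -> gamma221 e <= weight f.
Proof. exact: bigminn_le_cond. Qed.

Lemma gamma221_attained f : is_221_fun e f ->
  exists2 g, is_221_fun e g & gamma221 e = weight g.
Proof.
by move=> f221; apply: eq_bigminn f221 _ => g _; apply/leqW/weight_le2card.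
Qed.

Lemma in_nbhd v u : (u \in nbhd e v) = e v u.
Proof. by rewrite inE. Qed.

Lemma leq_nsum f v u : e v u -> f u <= nsum e f v.
Proof. by move=> evu; rewrite /nsum (bigD1 u) ?in_nbhd //= leq_addr. Qed.

Lemma is_221_funP f :
  reflect (forall v, 2 <= nsum e f v + (f v == 2 :> nat)) (is_221_fun e f).
Proof.
apply: (iffP forallP) => f221 v; have := f221 v.
all: by case: eqP => _; rewrite ?addn1 ?addn0.
Qed.

Definition supp f := [set v | 0 < f v].
Definition twos f := [set v | f v == 2 :> nat].

Lemma in_supp f v : (v \in supp f) = (0 < f v).
Proof. by rewrite inE. Qed.

Lemma in_twos f v : (v \in twos f) = (f v == 2 :> nat).
Proof. by rewrite inE. Qed.

Lemma weight_supp_twos f : weight f = #|supp f| + #|twos f|.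
Proof.
rewrite -!sum_mem_card -big_split; apply: eq_bigr => v _.
by rewrite in_supp in_twos; case: (f v) => -[|[|[]]].
Qed.

Lemma is_tdom_supp f : is_221_fun e f -> is_tdom e (supp f).
Proof.
move/is_221_funP=> f221; apply/forallP=> v; apply/existsPn => no_nbr.
have := f221 v; rewrite /nsum big1 => [|u]; first by case: (_ == _).
rewrite in_nbhd => evu; have := no_nbr u.
by rewrite in_supp evu andbT lt0n negbK => /eqP.
Qed.

Lemma sum_nsum f : symmetric e -> \sum_v nsum e f v = \sum_u f u * deg e u.
Proof.
move=> e_sym; rewrite /nsum; under eq_bigr => v _ do rewrite big_mkcond /=.
rewrite exchange_big; apply: eq_bigr => u _ /=.
rewrite /deg -sum_mem_card big_distrr; apply: eq_bigr => v _.
by rewrite !in_nbhd (e_sym v); case: (e u v); rewrite /= ?muln1 ?muln0.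
Qed.

Lemma double_card_gamma_t_le_weight f : symmetric e -> is_221_fun e f ->
  2 * #|T| + gamma_t e <= (maxdeg e).+1 * weight f.
Proof.
move=> e_sym f221.
have le_nsum : \sum_v nsum e f v <= maxdeg e * weight f.
  rewrite sum_nsum // /weight big_distrr; apply: leq_sum => u _.
  by rewrite mulnC leq_mul2r leq_bigmax orbT.
have le_count : 2 * #|T| <= \sum_v nsum e f v + #|twos f|.
  rewrite -sum_mem_card -big_split mulnC -sum1_card big_distrl /=.
  by apply: leq_sum => v _; rewrite in_twos mul1n; apply/is_221_funP.
have le_tdom : gamma_t e <= #|supp f| by apply/bigminn_le_cond/is_tdom_supp.
have := weight_supp_twos f; lia.
Qed.

Definition two_one_fun A B : {ffun T -> 'I_3} :=
  [ffun v => inord (if v \in A then 2 else v \in B)].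

Lemma two_one_funE A B v :
  two_one_fun A B v = (if v \in A then 2 else v \in B) :> nat.
Proof. by rewrite ffunE inordK //; case: ifP; case: (v \in B). Qed.

Lemma weight_two_one_fun A B : weight (two_one_fun A B) <= 2 * #|A| + #|B|.
Proof.
rewrite -!sum_mem_card big_distrr -big_split; apply: leq_sum => v _ /=.
by rewrite two_one_funE; case: (v \in A); case: (v \in B).
Qed.

Lemma is_tdom_setT : (forall v, exists u, e v u) -> is_tdom e setT.
Proof.
move=> no_isolated; apply/forallP => v; have [u evu] := no_isolated v.
by apply/existsP; exists u; rewrite in_setT.
Qed.

Lemma is_221_fun_tdom S : is_tdom e S -> is_221_fun e (two_one_fun S set0).
Proof.
move=> Stdom; apply/is_221_funP => v; apply: leq_trans _ (leq_addr _ _).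
have /existsP[u /andP[uS evu]] := forallP Stdom v.
by apply: leq_trans _ (leq_nsum _ evu); rewrite two_one_funE uS.
Qed.

Lemma gamma221_le_tdom S : is_tdom e S -> gamma221 e <= 2 * #|S|.
Proof.
move=> /is_221_fun_tdom/gamma221_le le_w; apply: leq_trans le_w _.
by apply: leq_trans (weight_two_one_fun _ _) _; rewrite cards0 addn0.
Qed.

Lemma is_221_fun_dom (nbr : T -> T) S : (forall v, e v (nbr v)) ->
  is_dom e S -> is_221_fun e (two_one_fun S (nbr @: S)).
Proof.
move=> nbrP Sdom; apply/is_221_funP => v; rewrite two_one_funE.
case vS: (v \in S); last first.
  have /orP[|/existsP[u /andP[uS evu]]] := forallP Sdom v; first by rewrite vS.
  apply: leq_trans _ (leq_addr _ _); apply: leq_trans _ (leq_nsum _ evu).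
  by rewrite two_one_funE uS.
rewrite addn1 ltnS; apply: leq_trans _ (leq_nsum _ (nbrP v)).
by rewrite two_one_funE imset_f //; case: ifP.
Qed.

Lemma gamma221_le_dom S :
  (forall v, exists u, e v u) -> is_dom e S -> gamma221 e <= 3 * #|S|.
Proof.
move=> no_isolated Sdom; pose nbr v := xchoose (no_isolated v).
have nbrP v : e v (nbr v) := xchooseP (no_isolated v).
have /gamma221_le le_w := is_221_fun_dom nbrP Sdom.
apply: leq_trans le_w _; apply: leq_trans (weight_two_one_fun S (nbr @: S)) _.
by have := leq_imset_card nbr S; lia.
Qed.

Lemma card_nbhdI_leq_nsum f v S :
  {in S, forall u, 0 < f u} -> #|nbhd e v :&: S| <= nsum e f v.
Proof.
move=> posS; rewrite -sum_mem_card /nsum [leqRHS]big_mkcond /=.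
apply: leq_sum => u _.
by rewrite inE in_nbhd; case: (e v u); case: (boolP (u \in S)) => // /posS.
Qed.

Lemma is_221_fun_dtdom S : is_dtdom e S -> is_221_fun e (two_one_fun set0 S).
Proof.
move=> Sdtdom; apply/is_221_funP => v; apply: leq_trans _ (leq_addr _ _).
apply: (leq_trans (forallP Sdtdom v)); apply: card_nbhdI_leq_nsum => u uS.
by rewrite two_one_funE inE uS.
Qed.

Lemma gamma221_le_dtdom S : is_dtdom e S -> gamma221 e <= #|S|.
Proof.
move=> /is_221_fun_dtdom/gamma221_le le_w; apply: leq_trans le_w _.
by apply: leq_trans (weight_two_one_fun _ _) _; rewrite cards0.
Qed.

End Graph.

Theorem theorem23 (T : finType) (e : rel T)
  (e_sym : symmetric e) (e_irr : irreflexive e)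
  (no_isolated : forall v : T, exists u : T, e v u) :
  [/\ ceil_div (2 * #|T| + gamma_t e) (maxdeg e).+1 <= gamma221 e,
      gamma221 e <= minn (3 * gamma e) (2 * gamma_t e)
    & (forall v : T, 2 <= deg e v) -> gamma221 e <= gamma_x2t e].
Proof.
have tdomT := is_tdom_setT no_isolated.
have domT : is_dom e setT by apply/forallP => v; rewrite in_setT.
split.
- have [f f221 ->] := gamma221_attained (is_221_fun_tdom tdomT).
  exact/ceil_div_leq/double_card_gamma_t_le_weight.
- rewrite leq_min /gamma /gamma_t.
  have [S Sdom ->] := bigmin_card_attained domT.
  have [S' S'tdom ->] := bigmin_card_attained tdomT.
  by rewrite (gamma221_le_dom no_isolated Sdom) (gamma221_le_tdom S'tdom).
- move=> deg_ge2; rewrite /gamma_x2t.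
  have dtdomT : is_dtdom e setT by apply/forallP => v; rewrite setIT deg_ge2.
  have [S Sdtdom ->] := bigmin_card_attained dtdomT.
  exact: gamma221_le_dtdom.
Qed.
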